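(* Let $T^{2,2}$ be the policy with $T^{2,2}_i=\mathcal{R}_{2,2}(T_i^* )$ for every $i\in[n]$. Then $T^{2,2}$ is resource-feasible and $F(T^{2,2})\le\sqrt2\cdot\mathrm{OPT}(P)$.
   Context: An instance consists of integers $n\ge 1$, $D\ge 1$; a joint ordering cost $K_0>0$; for each commodity $i\in[n]$ an ordering cost $K_i>0$ and a holding coefficient $H_i>0$; and resource coefficients $\alpha_{id}\ge 0$. A policy is $T=(T_1,\dots,T_n)\in\mathbb{R}_{>0}^n$; it is resource-feasible if $\sum_{i}\alpha_{id}/T_i\le 1$ for every $d\in[D]$. For $g>0$, $\Delta\ge 0$, $\mathcal{M}_{g,\Delta}=\{0,g,\dots,\lfloor\Delta/g\rfloor g\}$; $N(T,\Delta)=|\bigcup_{i}\mathcal{M}_{T_i,\Delta}|$; $J(T)=K_0\limsup_{\Delta\to\infty}N(T,\Delta)/\Delta$; $F(T)=J(T)+\sum_i(K_i/T_i+H_iT_i)$. The convex relaxation (P) is: minimize $K_0/T_{\min}+\sum_{i\in[n]}(K_i/T_i+H_iT_i)$ over $(T_{\min},T_1,\dots,T_n)$ subject to $T_i\ge T_{\min}\ge0$ for all $i$ and $\sum_i\alpha_{id}/T_i\le1$ for all $d$. $\mathrm{OPT}(P)$ is its optimal value and $T^*=(T^*_{\min},T^*_1,\dots,T^*_n)$ is a fixed optimal solution (with $T^*_{\min}>0$). For integers $m\ge2$, $k\ge1$: $\mathcal{G}_{m,k}=\{m^{p/k}T^*_{\min}:p\in\mathbb{Z}\}$ and $\mathcal{R}_{m,k}(t)=\min\{g\in\mathcal{G}_{m,k}:g>t\}$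 for $t>0$. *)

From HB Require Import structures.
From mathcomp Require Import all_boot all_order all_algebra.
From mathcomp Require Import all_classical all_reals all_analysis.
From mathcomp Require Import finmap.
Import numFieldTopology.Exports.
Set Implicit Arguments. Unset Strict Implicit. Unset Printing Implicit Defensive.
Import Order.TTheory GRing.Theory Num.Theory.
Local Open Scope classical_set_scope.
Local Open Scope ring_scope.

Section JRP.
Variable R : realType.

Definition mult_set (g Delta : R) : set R :=
  [set x | exists k : nat, x = k%:R * g /\ k%:R * g <= Delta].

Definition Ncount (n : nat) (T : 'I_n -> R) (Delta : R) : nat :=
  (#|` fset_set (\bigcup_i mult_set (T i) Delta) |)%fset.

Definition Jcost (n : nat) (K0 : R) (T : 'I_n -> R) : \bar R :=
  (K0%:E * limf_esup (fun Delta : R => ((Ncount T Delta)%:R / Delta)%:E) +oo%R)%E.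

Definition Fcost (n : nat) (K0 : R) (K H : 'I_n -> R) (T : 'I_n -> R) : \bar R :=
  (Jcost K0 T + (\sum_i (K i / T i + H i * T i))%:E)%E.

Definition resource_feasible (n D : nat) (alpha : 'I_n -> 'I_D -> R)
  (T : 'I_n -> R) : Prop :=
  forall d : 'I_D, \sum_i alpha i d / T i <= 1.

Definition objP (n : nat) (K0 : R) (K H : 'I_n -> R) (tmin : R) (T : 'I_n -> R) : R :=
  K0 / tmin + \sum_i (K i / T i + H i * T i).

(* Feasible points of (P); points with T_min = 0 have objective +oo and
   are therefore excluded. *)
Definition feasibleP (n D : nat) (alpha : 'I_n -> 'I_D -> R)
  (tmin : R) (T : 'I_n -> R) : Prop :=
  0 < tmin /\ (forall i, tmin <= T i) /\ resource_feasible alpha T.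

Definition OPT_P (n D : nat) (K0 : R) (K H : 'I_n -> R)
  (alpha : 'I_n -> 'I_D -> R) : R :=
  inf [set v | exists (tmin : R) (T : 'I_n -> R),
         feasibleP alpha tmin T /\ v = objP K0 K H tmin T].

Definition is_opt_P (n D : nat) (K0 : R) (K H : 'I_n -> R)
  (alpha : 'I_n -> 'I_D -> R) (tmin : R) (T : 'I_n -> R) : Prop :=
  feasibleP alpha tmin T /\
  forall tmin' T', feasibleP alpha tmin' T' ->
    objP K0 K H tmin T <= objP K0 K H tmin' T'.

Definition grid (m k : nat) (tmin : R) : set R :=
  [set g | exists p : int, g = (m%:R `^ (p%:~R / k%:R)) * tmin].

Definition round_up (m k : nat) (tmin t : R) : R :=
  inf [set g | grid m k tmin g /\ t < g].

End JRP.

From HB Require Import structures.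
From mathcomp Require Import all_boot all_order all_algebra.
From mathcomp Require Import all_classical all_reals all_analysis.
From mathcomp Require Import finmap ring lra zify.
Import Order.TTheory GRing.Theory Num.Theory.
Import numFieldTopology.Exports.
Local Open Scope classical_set_scope.
Local Open Scope ring_scope.

(* Since T*_i >= T*_min, rounding up to the grid {sqrt2^z T*_min} gives
   T*_i < T_i = sqrt2^p T*_min <= sqrt2 T*_i with p >= 1.  This keeps resource
   feasibility, and costs at most a factor sqrt2 in each K_i/T_i + H_i T_i.
   For the joint cost, sqrt2^p T*_min is a multiple of 2 T*_min (p even) or of
   sqrt2 T*_min (p odd), so at most Delta/(2 T*_min) + Delta/(sqrt2 T*_min) + 2
   joint orders occur up to time Delta, whence
   J <= (1/2 + 1/sqrt2) K0/T*_min <= sqrt2 K0/T*_min. *)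

Section Grid.
Set Implicit Arguments. Unset Strict Implicit.
Variables (R : realType) (m k : nat).
Hypotheses (m_gt1 : (1 < m)%N) (k_gt0 : (0 < k)%N).

Definition grid_ratio : R := m%:R `^ k%:R^-1.

Lemma grid_ratio_ge0 : 0 <= grid_ratio.
Proof. exact: powR_ge0. Qed.

Lemma grid_ratio_expn : grid_ratio ^+ k = m%:R.
Proof.
rewrite -powR_mulrn ?grid_ratio_ge0 // -powRrM mulVf ?powRr1 ?ler0n //.
by rewrite pnatr_eq0 -lt0n.
Qed.

Lemma grid_ratio_gt1 : 1 < grid_ratio.
Proof. by rewrite -(expr_gt1 k_gt0 grid_ratio_ge0) grid_ratio_expn ltr1n. Qed.

Lemma gridP (tmin g : R) :
  grid m k tmin g <-> exists z : int, g = grid_ratio ^ z * tmin.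
Proof.
have ratioE (z : int) : m%:R `^ (z%:~R / k%:R) = grid_ratio ^ z.
  by rewrite mulrC powRrM powR_intmul ?grid_ratio_ge0.
by split => -[z ->]; exists z; rewrite ratioE.
Qed.

Lemma grid_ratio_expn_unbounded (x : R) : exists N : nat, x < grid_ratio ^+ N.
Proof.
exists (k * Num.Def.archi_bound x)%N; rewrite exprM grid_ratio_expn.
apply: (lt_le_trans (upper_nthrootP (leqnn _))).
by rewrite lerXn2r ?nnegrE ?ler0n // ler_nat.
Qed.

Lemma round_up_bracket (tmin t : R) : 0 < tmin -> tmin <= t ->
  exists2 p : nat, (0 < p)%N &
    [/\ round_up m k tmin t = grid_ratio ^+ p * tmin,
        grid_ratio ^+ p.-1 * tmin <= t & t < grid_ratio ^+ p * tmin].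
Proof.
move=> tmin_gt0 tmin_le_t.
have above : exists p : nat, t < grid_ratio ^+ p * tmin.
  have [N ltN] := grid_ratio_expn_unbounded (t / tmin).
  by exists N; rewrite -ltr_pdivrMr.
case: (ex_minnP above) => p t_lt_p p_min.
have p_gt0 : (0 < p)%N.
  by rewrite lt0n; apply: contraTneq t_lt_p => ->; rewrite mul1r -leNgt.
have p1_le_t : grid_ratio ^+ p.-1 * tmin <= t.
  rewrite leNgt; apply/negP => /p_min; rewrite -ltnS prednK //.
  by rewrite ltnn.
exists p => //; split => //.
set S := [set g | grid m k tmin g /\ t < g].
have S_p : S (grid_ratio ^+ p * tmin) by split => //; apply/gridP; exists p.
have lb_p : lbound S (grid_ratio ^+ p * tmin).
  move=> _ [/gridP [z ->] t_lt_z]; rewrite ler_pM2r //.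
  rewrite -[_ ^+ p]/(grid_ratio ^ p%:Z) ler_eXz2l ?grid_ratio_gt1 //.
  rewrite leNgt; apply/negP => z_lt_p; move: t_lt_z; apply/negP; rewrite -leNgt.
  apply: le_trans p1_le_t; rewrite ler_pM2r //.
  rewrite -[_ ^+ p.-1]/(grid_ratio ^ p.-1%:Z) ler_eXz2l ?grid_ratio_gt1 //.
  by move: z_lt_p; rewrite -(prednK p_gt0) -addn1 PoszD; lia.
apply/le_anti/andP; split; first by apply: ge_inf => //; exists (grid_ratio ^+ p * tmin).
by apply: lb_le_inf => //; exists (grid_ratio ^+ p * tmin).
Qed.

Lemma round_up_gt (tmin t : R) : 0 < tmin -> tmin <= t -> t < round_up m k tmin t.
Proof.
by move=> tmin_gt0 tmin_le_t; have [p _ [-> _ ->]] := round_up_bracket tmin_gt0 tmin_le_t.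
Qed.

Lemma round_up_le_ratio (tmin t : R) : 0 < tmin -> tmin <= t ->
  round_up m k tmin t <= grid_ratio * t.
Proof.
move=> tmin_gt0 tmin_le_t; have [p p_gt0 [-> p1_le_t _]] := round_up_bracket tmin_gt0 tmin_le_t.
by rewrite -(prednK p_gt0) exprS -mulrA ler_wpM2l ?grid_ratio_ge0.
Qed.

End Grid.

Section Sqrt2.
Set Implicit Arguments. Unset Strict Implicit.
Variable R : realType.
Local Notation sqrt2 := (Num.sqrt (2 : R)).

Lemma grid_ratio22 : grid_ratio R 2 2 = sqrt2.
Proof. exact: powR12_sqrt. Qed.

Lemma sqrt2_expn_multiple (p : nat) : (0 < p)%N ->
  exists j : nat, sqrt2 ^+ p = j%:R * 2 \/ sqrt2 ^+ p = j%:R * sqrt2.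
Proof.
have sqrt2_sqr : sqrt2 ^+ 2 = 2 by rewrite sqr_sqrtr ?ler0n.
move=> p_gt0; rewrite -(odd_double_half p) -muln2 mulnC in p_gt0 *.
case: (odd p) p_gt0 => /= [_|]; first by exists (2 ^ p./2)%N; right;
  rewrite exprD exprM sqrt2_sqr natrX mulrC.
rewrite add0n => p2_gt0; exists (2 ^ p./2.-1)%N; left.
by rewrite exprM sqrt2_sqr natrX -exprSr prednK //; lia.
Qed.

Lemma inv2_add_inv_sqrt2_le : 2^-1 + sqrt2^-1 <= sqrt2.
Proof.
have sqrt2_gt1 : 1 < sqrt2 by rewrite -grid_ratio22 grid_ratio_gt1.
have sqrt2_inv : sqrt2^-1 = sqrt2 / 2.
  have sqrt2_sqr : sqrt2 * sqrt2 = 2 by rewrite -expr2 sqr_sqrtr ?ler0n.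
  by rewrite -[X in _ / X]sqrt2_sqr invfM mulrA divff ?mul1r // gt_eqF // (lt_trans ltr01).
rewrite sqrt2_inv; lra.
Qed.

Lemma round_up22_multiple (tmin t : R) : 0 < tmin -> tmin <= t ->
  exists j : nat, round_up 2 2 tmin t = j%:R * (2 * tmin)
               \/ round_up 2 2 tmin t = j%:R * (sqrt2 * tmin).
Proof.
move=> tmin_gt0 tmin_le_t.
have [p p_gt0 [-> _ _]] := round_up_bracket (m := 2) (k := 2) isT isT tmin_gt0 tmin_le_t.
rewrite grid_ratio22; have [j [->|->]] := sqrt2_expn_multiple p_gt0.
  by exists j; left; rewrite mulrA.
by exists j; right; rewrite mulrA.
Qed.

End Sqrt2.

Section Count.
Set Implicit Arguments. Unset Strict Implicit.
Variable R : realType.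
Implicit Types (g Delta : R).

Lemma mult_set_mull (j : nat) g Delta :
  mult_set (j%:R * g) Delta `<=` mult_set g Delta.
Proof. by move=> _ [i [-> iD]]; exists (i * j)%N; rewrite natrM -mulrA. Qed.

Lemma mult_set_sub_image g Delta : 0 < g -> 0 <= Delta ->
  mult_set g Delta `<=`
    (fun i : nat => i%:R * g) @` `I_(Num.truncn (Delta / g)).+1.
Proof.
move=> g_gt0 Delta_ge0 _ [i [-> iD]]; exists i => //=.
by rewrite ltnS truncn_ge_nat ?(divr_ge0 Delta_ge0 (ltW g_gt0)) // ler_pdivlMr.
Qed.

Lemma finite_mult_set g Delta : 0 < g -> 0 <= Delta -> finite_set (mult_set g Delta).
Proof.
move=> g_gt0 Delta_ge0; apply: sub_finite_set (mult_set_sub_image g_gt0 Delta_ge0) _.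
exact/finite_image/finite_II.
Qed.

Lemma card_mult_set_le g Delta : 0 < g -> 0 <= Delta ->
  (#|` fset_set (mult_set g Delta)|%fset)%:R <= Delta / g + 1.
Proof.
move=> g_gt0 Delta_ge0; set N := (Num.truncn (Delta / g)).+1.
set multiples := (fun i : nat => i%:R * g) @` `I_N.
have card_multiples : (#|` fset_set multiples| <= N)%N.
  rewrite fset_set_image ?finite_II //; apply: leq_trans (leq_imfset_card _ _ _) _.
  by rewrite (card_fset_set (card_eqxx _)).
apply: (@le_trans _ _ N%:R).
  rewrite ler_nat; apply: leq_trans card_multiples; apply: fsubset_leq_card.
  rewrite -fset_set_sub; first exact: mult_set_sub_image.
    exact: finite_mult_set.
  exact/finite_image/finite_II.
by rewrite /N -addn1 natrD lerD2r truncn_le (divr_ge0 Delta_ge0 (ltW g_gt0)).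
Qed.

Lemma Ncount_le_two_bases (n : nat) (T : 'I_n -> R) (g1 g2 Delta : R) :
  0 < g1 -> 0 < g2 -> 0 <= Delta ->
  (forall i, exists j : nat, T i = j%:R * g1 \/ T i = j%:R * g2) ->
  (Ncount T Delta)%:R <= Delta / g1 + Delta / g2 + 2.
Proof.
move=> g1_gt0 g2_gt0 Delta_ge0 T_mul.
have fin1 := finite_mult_set g1_gt0 Delta_ge0.
have fin2 := finite_mult_set g2_gt0 Delta_ge0.
have fin12 : finite_set (mult_set g1 Delta `|` mult_set g2 Delta).
  by rewrite finite_setU.
have cover : \bigcup_i mult_set (T i) Delta `<=` mult_set g1 Delta `|` mult_set g2 Delta.
  move=> x [i _]; have [j [->|->]] := T_mul i => /mult_set_mull x_in; [left|right] => //.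
apply: (@le_trans _ _ (#|` fset_set (mult_set g1 Delta `|` mult_set g2 Delta)|%fset)%:R).
  rewrite ler_nat; apply: fsubset_leq_card.
  by rewrite -fset_set_sub //; exact: sub_finite_set cover fin12.
rewrite fset_setU // (@le_trans _ _ (#|` fset_set (mult_set g1 Delta)| +
    #|` fset_set (mult_set g2 Delta)|)%N%:R) ?ler_nat ?leq_card_fsetU // natrD.
by have := card_mult_set_le g1_gt0 Delta_ge0;
   have := card_mult_set_le g2_gt0 Delta_ge0; lra.
Qed.

End Count.

Section Limsup.
Set Implicit Arguments. Unset Strict Implicit.
Variable R : realType.

Lemma limf_esup_ratio_le (f : R -> R) (c a : R) :
  (forall x, 0 < x -> f x <= c * x + a) ->
  (limf_esup (fun x => (f x / x)%:E) +oo%R <= c%:E)%E.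
Proof.
move=> f_le; apply/lee_addgt0Pr => e e_gt0; rewrite limf_esupE.
set far := [set x : R | `|a| / e < x].
apply: (@le_trans _ _ (ereal_sup ((fun x => (f x / x)%:E) @` far))).
  by apply: ereal_inf_lbound; exists far => //; apply: nbhs_pinfty_gt; exact: num_real.
apply: ge_ereal_sup => _ [x far_x <-].
have x_gt0 : 0 < x by apply: le_lt_trans far_x; rewrite divr_ge0 ?normr_ge0 ?ltW.
have a_lt : `|a| < e * x by rewrite mulrC -ltr_pdivrMr.
rewrite -EFinD lee_fin ler_pdivrMr //; apply: le_trans (f_le x x_gt0) _.
by have := ler_norm a; lra.
Qed.

Lemma Jcost_le (n : nat) (K0 c a : R) (T : 'I_n -> R) : 0 <= K0 ->
  (forall Delta, 0 < Delta -> (Ncount T Delta)%:R <= c * Delta + a) ->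
  (Jcost K0 T <= (K0 * c)%:E)%E.
Proof.
move=> K0_ge0 N_le; rewrite /Jcost EFinM lee_wpmul2l ?lee_fin //.
exact: limf_esup_ratio_le N_le.
Qed.

End Limsup.

Section Costs.
Set Implicit Arguments. Unset Strict Implicit.
Variable R : realType.

Lemma ordering_holding_cost_le (k h t u s : R) :
  0 <= k -> 0 <= h -> 0 < t -> t <= u -> u <= s * t -> 1 <= s ->
  k / u + h * u <= s * (k / t + h * t).
Proof.
move=> k_ge0 h_ge0 t_gt0 t_le_u u_le_st s_ge1.
have u_gt0 : 0 < u by apply: lt_le_trans t_le_u.
have k_u : k / u <= k / t by rewrite ler_wpM2l // lef_pV2 ?posrE.
have k_t : k / t <= s * (k / t) by rewrite ler_peMl // divr_ge0 // ltW.
have h_u : h * u <= s * (h * t) by rewrite mulrCA ler_wpM2l.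
by rewrite mulrDr; lra.
Qed.

End Costs.

Section Relaxation.
Set Implicit Arguments. Unset Strict Implicit.
Variables (R : realType) (n D : nat) (alpha : 'I_n -> 'I_D -> R).

Lemma resource_feasible_le (T T' : 'I_n -> R) :
  (forall i d, 0 <= alpha i d) -> (forall i, 0 < T i) -> (forall i, T i <= T' i) ->
  resource_feasible alpha T -> resource_feasible alpha T'.
Proof.
move=> alpha_ge0 T_gt0 T_le feas d; apply: le_trans (feas d); apply: ler_sum => i _.
rewrite ler_wpM2l // lef_pV2 ?posrE //; exact: lt_le_trans (T_le i).
Qed.

Lemma OPT_P_is_opt (K0 : R) (K H : 'I_n -> R) (tmin : R) (T : 'I_n -> R) :
  is_opt_P K0 K H alpha tmin T -> OPT_P K0 K H alpha = objP K0 K H tmin T.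
Proof.
move=> [feas opt]; rewrite /OPT_P; set V := (X in inf X).
have V_T : V (objP K0 K H tmin T) by exists tmin, T.
have lb_T : lbound V (objP K0 K H tmin T) by move=> _ [t' [T' [feas' ->]]]; exact: opt.
apply/le_anti/andP; split; first by apply: ge_inf => //; exists (objP K0 K H tmin T).
by apply: lb_le_inf => //; exists (objP K0 K H tmin T).
Qed.
End Relaxation.

Theorem lemma2p3 (R : realType) (n D : nat) (K0 : R) (K H : 'I_n -> R)
  (alpha : 'I_n -> 'I_D -> R) (tmin : R) (Ts : 'I_n -> R) :
  (0 < n)%N -> (0 < D)%N -> 0 < K0 ->
  (forall i, 0 < K i) -> (forall i, 0 < H i) ->
  (forall i d, 0 <= alpha i d) ->
  is_opt_P K0 K H alpha tmin Ts ->
  let T22 := fun i => round_up 2 2 tmin (Ts i) in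
  (forall i, 0 < T22 i) /\ resource_feasible alpha T22 /\
  (Fcost K0 K H T22 <= (Num.sqrt 2 * OPT_P K0 K H alpha)%:E)%E.
Proof.
move=> _ _ K0_gt0 K_gt0 H_gt0 alpha_ge0 Ts_opt T22.
have [[tmin_gt0 [tmin_le_Ts Ts_feas]] _] := Ts_opt.
have sqrt2_gt1 : 1 < Num.sqrt (2 : R) by rewrite -grid_ratio22 grid_ratio_gt1.
have Ts_gt0 i : 0 < Ts i by apply: lt_le_trans (tmin_le_Ts i).
have Ts_le i : Ts i <= T22 i by apply/ltW/round_up_gt.
have T22_le i : T22 i <= Num.sqrt 2 * Ts i by rewrite -grid_ratio22 round_up_le_ratio.
have T22_gt0 i : 0 < T22 i by apply: lt_le_trans (Ts_le i).
split => //; split; first exact: resource_feasible_le Ts_feas.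
rewrite /Fcost (OPT_P_is_opt Ts_opt) /objP mulrDr EFinD leeD //.
  have N_le Delta : 0 < Delta ->
      (Ncount T22 Delta)%:R <= ((2 * tmin)^-1 + (Num.sqrt 2 * tmin)^-1) * Delta + 2.
    move=> Delta_gt0; rewrite mulrDl ![_^-1 * Delta]mulrC.
    apply: Ncount_le_two_bases (ltW Delta_gt0) _ => [||i]; rewrite ?mulr_gt0 //.
    exact: round_up22_multiple.
  apply: le_trans (Jcost_le (ltW K0_gt0) N_le) _; rewrite lee_fin.
  have -> : K0 * ((2 * tmin)^-1 + (Num.sqrt 2 * tmin)^-1) = K0 / tmin * (2^-1 + (Num.sqrt 2)^-1).
    by field; rewrite !gt_eqF // (lt_trans ltr01 sqrt2_gt1).
  by rewrite mulrC ler_wpM2r ?inv2_add_inv_sqrt2_le // divr_ge0 ?ltW.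
rewrite lee_fin mulr_sumr; apply: ler_sum => i _.
exact: ordering_holding_cost_le (ltW (K_gt0 i)) (ltW (H_gt0 i)) (Ts_gt0 i) (Ts_le i) (T22_le i) (ltW sqrt2_gt1).
Qed.
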